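(* For any real continuous function $f\in C(\Omega)$, $[\mathcal D,\pi(M_f)]=0$ if and only if $f-f\circ\sigma=0$. The latter implies that $f$ is constant.
   Context: $\Omega=\{0,1\}^{\mathbb N}$ with the shift $\sigma$; for $a\in\{0,1\}$, $ax=(a,x_1,\dots)$. $\mu$ is the measure of maximal entropy (uniform Bernoulli product measure), $L^2(\mu)$ the Hilbert space of square-integrable functions. Ruelle operator $L\phi(x)=\frac12(\phi(0x)+\phi(1x))$; Koopman operator $K\phi=\phi\circ\sigma$. For $f\in C(\Omega)$, $M_f$ is multiplication $g\mapsto fg$ on $L^2(\mu)$. On $\mathcal H=L^2(\mu)\times L^2(\mu)$, $\mathcal D=\begin{pmatrix}0&K\\ L&0\end{pmatrix}$ and $\pi(A)=\begin{pmatrix}A&0\\0&A\end{pmatrix}$; $[\mathcal D,\pi(A)]=\mathcal D\pi(A)-\pi(A)\mathcal D$. *)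

From HB Require Import structures.
From mathcomp Require Import all_boot all_order all_algebra.
From mathcomp Require Import all_classical all_reals all_analysis.
Set Implicit Arguments. Unset Strict Implicit. Unset Printing Implicit Defensive.
Import Order.TTheory GRing.Theory Num.Theory.
Import numFieldTopology.Exports.
Local Open Scope classical_set_scope.
Local Open Scope ring_scope.

(* Omega = {0,1}^N, 0 ~ false, 1 ~ true. *)
Definition cylinder (n : nat) (w : nat -> bool) : set (nat -> bool) :=
  [set x | forall i, (i < n)%N -> x i = w i].

Definition cylinders : set (set (nat -> bool)) :=
  [set C | exists n w, C = cylinder n w].

(* Omega with the sigma-algebra generated by cylinder sets (= Borel sets of
   the product topology). Topologically, Omega is [cantor_space]. *)
Definition Omega : Type := g_sigma_algebraType cylinders.

Definition is_uniform_bernoulli {R : realType}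
  (mu : {measure set Omega -> \bar R}) : Prop :=
  forall (n : nat) (w : nat -> bool), mu (cylinder n w) = ((2%:R ^- n : R))%:E.

Definition shiftO (x : Omega) : Omega := fun n => x n.+1.
Definition pcons (a : bool) (x : Omega) : Omega :=
  fun n => if n is k.+1 then x k else a.

Section Ops.
Context {R : realType}.
Definition Koopman (g : Omega -> R) : Omega -> R := g \o shiftO.
Definition Ruelle (g : Omega -> R) : Omega -> R :=
  fun x => (g (pcons false x) + g (pcons true x)) / 2%:R.
Definition Mult (f g : Omega -> R) : Omega -> R := fun x => f x * g x.

Definition Dirac (h : (Omega -> R) * (Omega -> R)) : (Omega -> R) * (Omega -> R) :=
  (Koopman h.2, Ruelle h.1).
Definition piop (A : (Omega -> R) -> (Omega -> R))
  (h : (Omega -> R) * (Omega -> R)) : (Omega -> R) * (Omega -> R) :=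
  (A h.1, A h.2).
Definition commutator (A : (Omega -> R) -> (Omega -> R))
  (h : (Omega -> R) * (Omega -> R)) : (Omega -> R) * (Omega -> R) :=
  let u := Dirac (piop A h) in let v := piop A (Dirac h) in
  ((fun x => u.1 x - v.1 x), (fun x => u.2 x - v.2 x)).

(* [D, pi(M_f)] = 0 as an operator on H = L^2(mu) x L^2(mu):
   it sends every element of H to 0 (equality in L^2, i.e. mu-a.e.). *)
Definition commutator_vanishes (mu : {measure set Omega -> \bar R})
  (f : Omega -> R) : Prop :=
  forall g1 g2 : Omega -> R,
    g1 \in Lfun mu 2%:E -> g2 \in Lfun mu 2%:E ->
    (commutator (Mult f) (g1, g2)).1 = cst 0 %[ae mu] /\
    (commutator (Mult f) (g1, g2)).2 = cst 0 %[ae mu].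
End Ops.

Definition Ccont {R : realType} (f : Omega -> R) : Prop :=
  continuous (fun x : cantor_space => f x).

From HB Require Import structures.
From mathcomp Require Import all_boot all_order all_algebra.
From mathcomp Require Import all_classical all_reals all_analysis.
Import Order.TTheory GRing.Theory Num.Theory.
Import numFieldTopology.Exports.
Set Implicit Arguments.
Unset Strict Implicit.
Unset Printing Implicit Defensive.
Local Open Scope classical_set_scope.
Local Open Scope ring_scope.

(* Since [σ (a x) = x], the commutator [[D, π(M_f)]] acts by multiplication by
   [f ∘ σ - f] on the first component and by an average of [f (a x) - f x] on
   the second, so it vanishes when [f ∘ σ = f].  Conversely, testing it on the
   constant function 1 gives [f ∘ σ - f = 0] μ-a.e.; every cylinder has positive
   measure and cylinders shrink to points, so the continuous function
   [f ∘ σ - f] vanishes everywhere.  Finally a continuous σ-invariant [f] is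
   constant: the word agreeing with [x] on [n] letters and continuing with [y]
   is mapped to [y] by [σ^n] and tends to [x], so [f x = f y]. *)

Lemma cvg_cantor_space (I : Type) (F : set_system I) (FF : Filter F)
    (u : I -> cantor_space) (x : cantor_space) :
  (forall i, \forall n \near F, u n i = x i) -> u @ F --> x.
Proof.
move=> ux; apply/cvg_sup => i A [_ [[B _ <-] Bx] BA].
by apply: filterS (ux i) => n uxn; apply: BA; rewrite /= uxn.
Qed.

Lemma cylinder_cvg (u : nat -> Omega) (x : Omega) :
  (forall n, cylinder n x (u n)) -> u @ \oo --> (x : cantor_space).
Proof. by move=> ux; apply: cvg_cantor_space => i; exists i.+1 => // n /= /ux. Qed.

Lemma shiftO_continuous : continuous (shiftO : cantor_space -> cantor_space).
Proof.
move=> x; apply/cvg_sup => i A [_ [[B _ <-] Bx] BA].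
have nbhsB : nbhs (x i.+1) B.
  by apply: open_nbhs_nbhs; split; first exact: discrete_open.
have : nbhs x (proj i.+1 @^-1` B).
  exact: (@proj_continuous _ (fun=> bool) i.+1 x _ nbhsB).
by apply: filterS => y; apply: BA.
Qed.

Lemma Ccont_comp_shiftO (R : realType) (f : Omega -> R) :
  Ccont f -> Ccont (f \o shiftO).
Proof. by move=> fc x; have := continuous_comp (@shiftO_continuous x) (fc _). Qed.

Lemma Ccont_eq_of_cylinders (R : realType) (h : Omega -> R) (x : Omega) (c : R) :
  Ccont h -> (forall n, exists y, cylinder n x y /\ h y = c) -> h x = c.
Proof.
move=> hc /choice[u ux].
have ux' : forall n, cylinder n x (u n) by move=> n; case: (ux n).
have hu := cvg_comp _ _ (cylinder_cvg ux') (hc x).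
have huc : (fun x : cantor_space => h x) \o u = cst c.
  by apply: funext => n; case: (ux n).
rewrite huc in hu.
by rewrite -(cvg_lim (@Rhausdorff R) hu) lim_cst.
Qed.

Lemma cylinder_measurable n w : measurable (cylinder n w : set Omega).
Proof. by apply: sub_sigma_algebra; exists n, w. Qed.

Section uniform_bernoulli.
Variables (R : realType) (mu : {measure set Omega -> \bar R}).
Hypothesis hmu : is_uniform_bernoulli mu.

Lemma ae_meets_cylinder (P : Omega -> Prop) n w :
  (\forall x \ae mu, P x) -> exists y, cylinder n w y /\ P y.
Proof.
case=> N [mN muN notPN]; apply: contrapT => noP.
have : mu (cylinder n w) = 0%E.
  apply: subset_measure0 (cylinder_measurable n w) mN _ muN => y wy.
  by apply: notPN => Py; apply: noP; exists y.
by rewrite hmu => -[] /eqP; rewrite invr_eq0 expf_eq0 pnatr_eq0 andbF.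
Qed.

Lemma Lfun_cst1 : cst 1 \in Lfun mu 2%:E.
Proof.
rewrite inE/=; apply/andP; split; rewrite inE//=.
rewrite /finite_norm unlock poweR_lty//.
under eq_integral => x _ do rewrite /= normr1 powR1.
rewrite integral_cst//= mul1e.
have -> : [set: Omega] = cylinder 0 (fun _ => false) by apply/seteqP; split.
by rewrite hmu expr0 invr1 ltry.
Qed.

Lemma Ccont_ae_eq (h : Omega -> R) (c : R) :
  Ccont h -> (\forall x \ae mu, h x = c) -> forall x, h x = c.
Proof.
move=> hc hae x; apply: Ccont_eq_of_cylinders hc _ => n.
exact: ae_meets_cylinder.
Qed.

End uniform_bernoulli.

Lemma iter_shiftO k (x : Omega) : iter k shiftO x = (fun i => x (i + k)%N).
Proof.
elim: k => [|k IH] /=; first by apply: funext => i; rewrite addn0.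
by rewrite IH; apply: funext => i; rewrite /shiftO addSnnS.
Qed.

Lemma shift_invariant_iter (T : Type) (f : Omega -> T) k x :
  (forall x, f (shiftO x) = f x) -> f (iter k shiftO x) = f x.
Proof. by move=> finv; elim: k => //= k <-; exact: finv. Qed.

Definition splice n (x y : Omega) : Omega :=
  fun i => if (i < n)%N then x i else y (i - n)%N.

Lemma cylinder_splice n x y : cylinder n x (splice n x y).
Proof. by move=> i ltin; rewrite /splice ltin. Qed.

Lemma iter_shiftO_splice n x y : iter n shiftO (splice n x y) = y.
Proof.
by rewrite iter_shiftO; apply: funext => i; rewrite /splice ltnNge leq_addl addnK.
Qed.

Lemma Ccont_shift_invariant_const (R : realType) (f : Omega -> R) :
  Ccont f -> (forall x, f (shiftO x) = f x) -> forall x y, f x = f y.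
Proof.
move=> fc finv x y; apply: Ccont_eq_of_cylinders fc _ => n.
exists (splice n x y); split; first exact: cylinder_splice.
by rewrite -(shift_invariant_iter n _ finv) iter_shiftO_splice.
Qed.

Lemma commutator_Mult_fst (R : realType) (f : Omega -> R) g :
  (commutator (Mult f) g).1 = fun x => (f (shiftO x) - f x) * g.2 (shiftO x).
Proof. by apply: funext => x; rewrite /= mulrBl. Qed.

Lemma commutator_Mult_shift_invariant (R : realType) (f : Omega -> R) g :
  (forall x, f (shiftO x) = f x) -> commutator (Mult f) g = (cst 0, cst 0).
Proof.
move=> finv; have fpcons a x : f (pcons a x) = f x by rewrite -finv.
rewrite /commutator /Dirac /piop /Koopman /Ruelle /Mult /=.
by congr pair; apply: funext => x /=; rewrite ?finv ?fpcons -?mulrDr ?mulrA subrr.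
Qed.

Theorem lemma2p12 (R : realType) (mu : {measure set Omega -> \bar R})
  (hmu : is_uniform_bernoulli mu) (f : Omega -> R)
  (hf : Ccont f) :
  (commutator_vanishes mu f <-> (forall x, f x - f (shiftO x) = 0)) /\
  ((forall x, f x - f (shiftO x) = 0) -> exists c : R, forall x, f x = c).
Proof.
have -> : (forall x, f x - f (shiftO x) = 0) = (forall x, f (shiftO x) = f x).
  apply/propext; split=> finv x; last by rewrite finv subrr.
  by apply/esym/eqP; rewrite -subr_eq0 finv.
split; last first.
  by move=> finv; exists (f (fun=> false)) => x; exact: Ccont_shift_invariant_const.
split=> [vanish|finv g1 g2 _ _].
- have [fst0 _] := vanish _ _ (Lfun_cst1 hmu) (Lfun_cst1 hmu).
  have hc : Ccont (fun x => f (shiftO x) - f x).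
    by move=> x; apply: continuousB; [exact: Ccont_comp_shiftO|exact: hf].
  have ae0 : \forall x \ae mu, f (shiftO x) - f x = 0.
    by apply: filterS fst0 => x; rewrite commutator_Mult_fst /= mulr1 => /(_ I).
  by move=> x; apply/eqP; rewrite -subr_eq0 (Ccont_ae_eq hmu hc ae0).
- rewrite (commutator_Mult_shift_invariant (g1, g2) finv).
  by split; exact: aeW.
Qed.
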